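(* Suppose $m=2n$ and $\tilde B=\begin{bmatrix}B\\ I_n\end{bmatrix}$. Then for each vertex $t\in\mathbb T_n$ and each $1\le i\le n$, $\tilde{\mathbf g}_{i;t}=\begin{bmatrix}\mathbf g_{i;t}\\ 0\end{bmatrix}$.
   Context: $[b]_+=\max(b,0)$. $\mathbb T_n$ is the $n$-regular tree with edges labeled $1,\dots,n$, distinct labels at each vertex; $t\overset{k}{-}t'$ denotes an edge labeled $k$; $t_0$ a root. Fix positive integers $r_1,\dots,r_n$ and a skew-symmetrizable integer $n\times n$ matrix $B$; $\tilde B=(b_{ij})$ is the given $m\times n$ matrix. Matrices $\tilde B_t=(b_{ij;t})$: $\tilde B_{t_0}=\tilde B$ and for $t\overset{k}{-}t'$, $b_{ij;t'}=-b_{ij;t}$ if $i=k$ or $j=k$, else $b_{ij;t}+r_k([-\varepsilon b_{ik;t}]_+b_{kj;t}+b_{ik;t}[\varepsilon b_{kj;t}]_+)$ (for $i\le m$, $j\le n$; $\varepsilon\in\{\pm1\}$, results independent of $\varepsilon$). $C_t=(c_{ij;t})$, $n\times n$: $C_{t_0}=I_n$, $c_{ij;t'}=-c_{ij;t}$ if $j=k$, else $c_{ij;t}+r_k(c_{ik;t}[\varepsilon b_{kj;t}]_++[-\varepsilon c_{ik;t}]_+b_{kj;t})$; each column of $C_t$ is sign-coherent (nonzero, entries all $\geq0$ or all $\le0$). $G_t$, $n\times n$ with columns $\mathbf g_{i;t}$: $G_{t_0}=I_n$, $\mathbf g_{i;t'}=\mathbf g_{i;t}$ ($i\neq k$), $\mathbf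 g_{k;t'}=-\mathbf g_{k;t}+r_k(\sum_{j=1}^n[-\varepsilon b_{jk;t}]_+\mathbf g_{j;t}-\sum_{j=1}^n[-\varepsilon c_{jk;t}]_+\mathbf b_j)$, $\mathbf b_j$ the $j$-th column of $B$. $\tilde G_t$, $m\times m$ with columns $\tilde{\mathbf g}_{i;t}$: $\tilde G_{t_0}=I_m$, $\tilde{\mathbf g}_{i;t'}=\tilde{\mathbf g}_{i;t}$ ($i\ne k$), $\tilde{\mathbf g}_{k;t'}=-\tilde{\mathbf g}_{k;t}+r_k(\sum_{j=1}^m[-\varepsilon b_{jk;t}]_+\tilde{\mathbf g}_{j;t}-\sum_{j=1}^n[-\varepsilon c_{jk;t}]_+\tilde{\mathbf b}_{j})$, $\tilde{\mathbf b}_j$ the $j$-th column of $\tilde B$. ($\tilde{\mathbf g}_{i;t}$ is the $g$-vector of a quantum cluster variable of a generalized quantum cluster algebra with principal coefficients.) *)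

From HB Require Import structures.
From mathcomp Require Import all_boot all_order all_algebra.
Set Implicit Arguments. Unset Strict Implicit. Unset Printing Implicit Defensive.
Import Order.TTheory GRing.Theory Num.Theory.
Local Open Scope ring_scope.

Definition posp (b : int) : int := Num.max b 0.

Definition skew_symmetrizable (n : nat) (B : 'M[int]_n) : Prop :=
  exists d : 'I_n -> int, (forall i, 0 < d i) /\
    (forall i j, d i * B i j = - (d j * B j i)).

(* Data attached to a vertex t: tilde B_t (m x n with m = n + p),
   C_t (n x n), G_t (n x n, columns g_{i;t}), tilde G_t (m x m). *)
Record seed (n p : nat) := Seed {
  sB  : 'M[int]_(n + p, n);
  sC  : 'M[int]_n;
  sG  : 'M[int]_n;
  sGt : 'M[int]_(n + p) }.

Section Mutation.
Variables (n p : nat) (B0 : 'M[int]_(n + p, n)) (r : 'I_n -> int) (eps : int).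

Notation up i := (lshift p i).

Definition mutate (k : 'I_n) (s : seed n p) : seed n p :=
  let Bt := sB s in let C := sC s in let G := sG s in let Gt := sGt s in
  Seed
    (\matrix_(i < n + p, j < n)
       if (i == up k) || (j == k) then - Bt i j
       else Bt i j + r k * (posp (- eps * Bt i k) * Bt (up k) j
                            + Bt i k * posp (eps * Bt (up k) j)))
    (\matrix_(i < n, j < n)
       if j == k then - C i j
       else C i j + r k * (C i k * posp (eps * Bt (up k) j)
                           + posp (- eps * C i k) * Bt (up k) j))
    (\matrix_(i < n, j < n)
       if j == k then
         - G i k + r k * (\sum_(l < n) posp (- eps * Bt (up l) k) * G i l
                          - \sum_(l < n) posp (- eps * C l k) * B0 (up i) l)
       else G i j)
    (\matrix_(i < n + p, j < n + p)
       if j == up k then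
         - Gt i j + r k * (\sum_(l < n + p) posp (- eps * Bt l k) * Gt i l
                           - \sum_(l < n) posp (- eps * C l k) * B0 i l)
       else Gt i j).

Definition seed0 : seed n p := Seed B0 1%:M 1%:M 1%:M.

(* Vertices of T_n are identified with the reduced words k_1 ... k_s
   (consecutive labels distinct) labelling the unique path
   t0 -k_1- t1 -k_2- ... -k_s- t from the root. *)
Definition seed_at (ks : seq 'I_n) : seed n p := foldl (fun s k => mutate k s) seed0 ks.

End Mutation.

Definition reduced (n : nat) (ks : seq 'I_n) : bool :=
  if ks is k :: s then path (fun a b : 'I_n => a != b) k s else true.

From HB Require Import structures.
From mathcomp Require Import all_boot all_order all_algebra.
Import Order.TTheory GRing.Theory Num.Theory.
Local Open Scope ring_scope.

(* With principal coefficients, four facts hold at every vertex: the frozen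
   rows of B~_t form C_t, the last n columns of G~_t are the unit vectors,
   and the first n columns of G~_t are (g_{i;t}; 0).  They are preserved by
   each mutation: the frozen rows of B~ mutate by the same rule as C, and in
   the top rows of the new column k of G~, the extra
   columns of G~_t only meet zero entries, while in the bottom rows the sum
   sum_l [-eps b_{n+l,k}]_+ e_l = [-eps c_{.k}]_+ cancels the coefficient term
   sum_l [-eps c_{lk}]_+ (I_n)_{.l}. *)

Section PrincipalCoefficients.

Variables (n : nat) (r : 'I_n -> int) (B : 'M[int]_n) (eps : int).

Notation Bp := (col_mx B (1%:M : 'M[int]_n)).

Definition principal_seed (s : seed n n) : Prop :=
  [/\ forall a j, sB s (rshift n a) j = sC s a j,
      forall x j, sGt s x (rshift n j) = (x == rshift n j)%:R,
      forall a i, sGt s (lshift n a) (lshift n i) = sG s a i &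
      forall a i, sGt s (rshift n a) (lshift n i) = 0].

Lemma principal_seed0 : principal_seed (seed0 Bp).
Proof.
split=> /= [a j|x j|a i|a i].
- by rewrite col_mxEd.
- by rewrite mxE.
- by rewrite !mxE (inj_eq (@lshift_inj _ _)).
- by rewrite !mxE eq_rlshift.
Qed.

Lemma principal_seed_mutate k s :
  principal_seed s -> principal_seed (mutate Bp r eps k s).
Proof.
case=> BrC Gtr Gtul Gtdl; split=> /= [a j|x j|a i|a i]; rewrite !mxE.
- rewrite eq_rlshift /=; case: eqP => _; first by rewrite BrC.
  by rewrite !BrC [_ * sB s _ j + _]addrC.
- by rewrite eq_rlshift Gtr.
- rewrite (inj_eq (@lshift_inj _ _)); case: eqP => [->|_]; last exact: Gtul.
  rewrite Gtul big_split_ord /=.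
  under eq_bigr => l _ do rewrite Gtul.
  rewrite [X in _ + X - _]big1 ?addr0 => [|l _]; last by rewrite Gtr eq_lrshift mulr0.
  by under [X in _ - X]eq_bigr => l _ do rewrite col_mxEu.
- case: eqP => [->|_]; last exact: Gtdl.
  rewrite Gtdl big_split_ord /=.
  under eq_bigr => l _ do rewrite Gtdl mulr0.
  rewrite big1 // add0r.
  under eq_bigr => l _ do rewrite Gtr (inj_eq (@rshift_inj _ _)) BrC.
  under [X in _ - X]eq_bigr => l _ do rewrite col_mxEd mxE.
  by rewrite !add0r subrr mulr0.
Qed.

Lemma principal_seed_at ks : principal_seed (seed_at Bp r eps ks).
Proof.
rewrite /seed_at; elim: ks (seed0 Bp) principal_seed0 => [|k ks IHks] s //= Ps.
exact/IHks/principal_seed_mutate.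
Qed.

Lemma principal_seed_col_sGt s i :
  principal_seed s -> col (lshift n i) (sGt s) = col_mx (col i (sG s)) 0.
Proof.
case=> _ _ Gtul Gtdl; apply/matrixP => x y.
rewrite -[x]splitK; case: (split x) => a /=.
- by rewrite col_mxEu !mxE Gtul.
- by rewrite col_mxEd !mxE Gtdl.
Qed.

End PrincipalCoefficients.

Theorem lemmal (n : nat) (r : 'I_n -> int) (B : 'M[int]_n) (eps : int) :
  (forall i, 0 < r i) -> skew_symmetrizable B -> (eps = 1 \/ eps = -1) ->
  forall ks : seq 'I_n, reduced ks ->
  forall i : 'I_n,
    col (lshift n i) (sGt (seed_at (col_mx B 1%:M) r eps ks))
    = col_mx (col i (sG (seed_at (col_mx B 1%:M) r eps ks))) 0.
Proof.
move=> _ _ _ ks _ i.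
exact/principal_seed_col_sGt/principal_seed_at.
Qed.
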